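(* Assume the abundance condition (A). Then for every $\boldsymbol m\in[0,1]^2$ an equilibrium exists, and in every equilibrium the machine rental rate is $r^*=F(\boldsymbol m)$ and the wage is $w^*=\max\{\bar w_s,\bar w_b,\bar w_t\}$. Every equilibrium allocation maximizes total output $Y$ over all feasible allocations. Moreover, together with these prices the following allocations form an equilibrium (and, whenever the maximum $\max\{\bar w_s,\bar w_b,\bar w_t\}$ is attained by exactly one of the three numbers, they form the unique equilibrium allocation): (i) if $\boldsymbol m\in R_s$: $\alpha_s^*=1$ and $\mu_s^*=\mu$ (only single-layer firms); (ii) if $\boldsymbol m\in R_b$: $\alpha_b^*=1$, $\mu_b^*=n(\boldsymbol m)$, $\mu_s^*=\mu-\mu_b^*$ (only bottom-automated and single-layer automated firms); (iii) if $\boldsymbol m\in R_t$: $\alpha_t^*=1$, $\mu_t^*=1/n(\boldsymbol h)$, $\mu_s^*=\mu-\mu_t^*$ (only top-automated and single-layer automated firms).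
   Context: Fix a cumulative distribution function $F$ on $[0,1]^2$ with a density $f$ that has full support on $[0,1]^2$; a problem $\boldsymbol x=(x_1,x_2)$ is drawn from $F$. Fix a communication cost $c\in(0,1)$, human knowledge $\boldsymbol h=(h_1,h_2)\in(0,1)^2$ (a unit mass of identical humans, each with one unit of time), and a mass $\mu>0$ of machines, each with one unit of time and common knowledge $\boldsymbol m=(m_1,m_2)\in[0,1]^2$. For $\boldsymbol x,\boldsymbol y\in[0,1]^2$ write $\boldsymbol x\vee\boldsymbol y=(\max\{x_1,y_1\},\max\{x_2,y_2\})$, and for $\boldsymbol x$ with $F(\boldsymbol x)<1$ let $n(\boldsymbol x)=\frac{1}{c(1-F(\boldsymbol x))}$. Given a wage $w\ge 0$ and rental rate $r\ge0$ (output price normalized to 1), there are four firm types with profits: single-layer non-automated (one human): $F(\boldsymbol h)-w$; single-layer automated (one machine): $F(\boldsymbol m)-r$; bottom-automated ($b$: one human solver and $n(\boldsymbol m)$ machine workers; available only when $F(\boldsymbol m)<1$): $\Pi_b=n(\boldsymbol m)[F(\boldsymbol m\vee\boldsymbol h)-r]-w$; top-automated ($t$: one machine solver and $n(\boldsymbol h)$ human workers): $\Pi_t=n(\boldsymbol h)[F(\boldsymbol m\vee\boldsymbol h)-w]-r$. A feasible allocation is $(\alpha_s,\alpha_b,\alpha_t,\mu_s,\mu_b,\mu_t)\ge 0$ (masses of humans in single-layer non-automated, $b$, $t$ firms; masses of machines in single-layer automated, $b$, $t$ firms) with $\mu_b=\alpha_b n(\boldsymbol m)$, $\mu_t=\alpha_t/n(\boldsymbol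 h)$, $\alpha_s+\alpha_b+\alpha_t=1$, $\mu_s+\mu_b+\mu_t=\mu$. Its total output is $Y=\alpha_b n(\boldsymbol m)F(\boldsymbol m\vee\boldsymbol h)+\alpha_tF(\boldsymbol m\vee\boldsymbol h)+\alpha_sF(\boldsymbol h)+\mu_sF(\boldsymbol m)$. An equilibrium is a feasible allocation and prices $(w,r)\ge0$ such that every firm type has nonpositive profit and every firm type used with positive mass earns zero profit. Define $\bar w_s=F(\boldsymbol h)$, $\bar w_b=n(\boldsymbol m)\big(F(\boldsymbol m\vee\boldsymbol h)-F(\boldsymbol m)\big)$ (with $\bar w_b:=0$ if $F(\boldsymbol m)=1$), $\bar w_t=F(\boldsymbol m\vee\boldsymbol h)-F(\boldsymbol m)/n(\boldsymbol h)$, and the regions $R_s=\{\boldsymbol m\in[0,1]^2:\bar w_s\ge\max\{\bar w_b,\bar w_t\}\}$, $R_b=\{\boldsymbol m:\bar w_b>\max\{\bar w_s,\bar w_t\}\}$, $R_t=[0,1]^2\setminus(R_s\cup R_b)$. Abundance condition (A): $\mu>\max\Big\{\frac{1}{c(1-F(1,h_2))},\frac{1}{c(1-F(h_1,1))}\Big\}$. *)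

From HB Require Import structures.
From mathcomp Require Import all_boot all_order all_algebra.
From mathcomp Require Import all_classical all_reals all_analysis.
Set Implicit Arguments. Unset Strict Implicit. Unset Printing Implicit Defensive.
Import Order.TTheory GRing.Theory Num.Theory.
Local Open Scope classical_set_scope.
Local Open Scope ring_scope.

Section Model.
Variable R : realType.

Definition unit_square : set (R * R) := `[0%R, 1%R]%classic `*` `[0%R, 1%R]%classic.

Definition leb2 := ((@lebesgue_measure R) \x (@lebesgue_measure R))%E.

Definition density_cdf (f : R * R -> R) (x : R * R) : R :=
  fine (\int[leb2]_(y in `[0%R, x.1]%classic `*` `[0%R, x.2]%classic) (f y)%:E)%E.

Definition full_support_density (f : R * R -> R) : Prop :=
  [/\ measurable_fun unit_square f,
      (forall y, unit_square y -> 0 < f y),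
      leb2.-integrable unit_square (fun y => (f y)%:E)
    & (\int[leb2]_(y in unit_square) (f y)%:E = 1)%E].

Definition vee (x y : R * R) : R * R := (Num.max x.1 y.1, Num.max x.2 y.2).

Variables (F : R * R -> R) (c : R) (h m : R * R) (mu : R).

Definition nn (x : R * R) : R := 1 / (c * (1 - F x)).

(** bottom-automated firms are available only when F(m) < 1 *)
Definition b_available : Prop := F m < 1.

Definition profit_s (w : R) : R := F h - w.
Definition profit_a (r : R) : R := F m - r.
Definition profit_b (w r : R) : R := nn m * (F (vee m h) - r) - w.
Definition profit_t (w r : R) : R := nn h * (F (vee m h) - w) - r.

Record alloc := Alloc {
  al_s : R; al_b : R; al_t : R; mu_s : R; mu_b : R; mu_t : R }.

Definition feasible (a : alloc) : Prop :=
  [/\ 0 <= al_s a, 0 <= al_b a & 0 <= al_t a] /\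
  [/\ 0 <= mu_s a, 0 <= mu_b a & 0 <= mu_t a] /\
  [/\ (if `[< b_available >] then mu_b a = al_b a * nn m
       else al_b a = 0 /\ mu_b a = 0),
      mu_t a = al_t a / nn h,
      al_s a + al_b a + al_t a = 1
    & mu_s a + mu_b a + mu_t a = mu].

Definition output (a : alloc) : R :=
  al_b a * nn m * F (vee m h) + al_t a * F (vee m h)
  + al_s a * F h + mu_s a * F m.

Definition equilibrium (a : alloc) (w r : R) : Prop :=
  [/\ feasible a, 0 <= w, 0 <= r,
      [/\ profit_s w <= 0, profit_a r <= 0,
          (b_available -> profit_b w r <= 0) & profit_t w r <= 0]
    &
      [/\ (0 < al_s a -> profit_s w = 0),
          (0 < mu_s a -> profit_a r = 0),
          (0 < al_b a -> profit_b w r = 0)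
        & (0 < al_t a -> profit_t w r = 0)]].

Definition wbar_s : R := F h.
Definition wbar_b : R :=
  if `[< b_available >] then nn m * (F (vee m h) - F m) else 0.
Definition wbar_t : R := F (vee m h) - F m / nn h.

Definition wstar : R := Num.max wbar_s (Num.max wbar_b wbar_t).

Definition in_Rs : Prop := Num.max wbar_b wbar_t <= wbar_s.
Definition in_Rb : Prop := Num.max wbar_s wbar_t < wbar_b.
Definition in_Rt : Prop := ~ in_Rs /\ ~ in_Rb.

Definition unique_max : Prop :=
  [\/ wbar_b < wbar_s /\ wbar_t < wbar_s,
      wbar_s < wbar_b /\ wbar_t < wbar_b
    | wbar_s < wbar_t /\ wbar_b < wbar_t].

Definition star_alloc : alloc :=
  if `[< in_Rs >] then Alloc 1 0 0 mu 0 0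
  else if `[< in_Rb >] then Alloc 0 1 0 (mu - nn m) (nn m) 0
  else Alloc 0 0 1 (mu - 1 / nn h) 0 (1 / nn h).

End Model.

Definition abundance {R : realType} (F : R * R -> R) (c mu : R) (h : R * R) : Prop :=
  Num.max (1 / (c * (1 - F (1, h.2)))) (1 / (c * (1 - F (h.1, 1)))) < mu.

(* At the rental rate r = F(m) a machine earns exactly its stand-alone output, and
   each way of employing humans (alone, as solver over machines, as worker under a
   machine) then breaks even at the wage wbar_s, wbar_b, wbar_t respectively.
   The rental rate is forced by abundance (A): layered firms cannot absorb all
   machines, so some machines work alone and must earn F(m). Nonpositive profits give
   w >= max wbar_i, and zero profit in an occupation that employs humans gives equality.
   Efficiency is linear-programming duality: for every feasible allocation,
   w + r mu - Y equals the firm-weighted sum of the losses, which is nonnegative at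
   equilibrium prices and zero at the equilibrium allocation. When one wbar_i is the
   strict maximum, the other occupations are idle in every equilibrium, and the
   human masses determine the machine masses.
   The density enters only through its CDF: since f > 0 on the square, F is monotone,
   positive at interior points, and below 1 unless both coordinates are 1; with (A)
   this gives c (1 - F(h)) < mu and n(m) < mu whenever F(m) < F(m \/ h). *)

From HB Require Import structures.
From mathcomp Require Import all_boot all_order all_algebra.
From mathcomp Require Import all_classical all_reals all_analysis.
From mathcomp Require Import measurable_realfun.
From mathcomp.algebra_tactics Require Import ring lra.
Set Implicit Arguments.
Unset Strict Implicit.
Unset Printing Implicit Defensive.
Import Order.TTheory GRing.Theory Num.Theory.
Local Open Scope classical_set_scope.
Local Open Scope ring_scope.

Lemma integral_gt0 d (T : measurableType d) (R : realType)
    (nu : {measure set T -> \bar R}) (D : set T) (g : T -> R) :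
  measurable D -> measurable_fun D g -> (forall x, D x -> 0 < g x) ->
  (0 < nu D)%E -> (0 < \int[nu]_(x in D) (g x)%:E)%E.
Proof.
move=> mD mg g_gt0 nuD_gt0.
have g_ge0 x : D x -> (0 <= (g x)%:E)%E by move/g_gt0; rewrite lee_fin => /ltW.
rewrite lt0e integral_ge0 // andbT; apply/negP => /eqP int0.
have : (\int[nu]_(x in D) `|(g x)%:E| = 0)%E.
  by rewrite -int0; apply: eq_integral => x /[!inE] Dx; rewrite gee0_abs ?g_ge0.
case/(ae_eq_integral_abs nu mD ((measurable_EFinP _ _).2 mg)) => N [mN nuN0 DN].
suff : (nu D <= nu N)%E by rewrite nuN0 leNgt nuD_gt0.
apply: le_measure; rewrite ?inE // => x Dx; apply: DN => /(_ Dx) [] gx0.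
by have := g_gt0 x Dx; rewrite gx0 ltxx.
Qed.

Lemma mulr_eq0_pos (R : realDomainType) (x y : R) :
  0 <= x -> (0 < x -> y = 0) -> x * y = 0.
Proof.
by rewrite le_eqVlt => /predU1P[<- _|/[swap]/[apply] ->]; rewrite ?mul0r ?mulr0.
Qed.

Definition lower_rect {R : realType} (x : R * R) : set (R * R) :=
  `[0, x.1] `*` `[0, x.2].

Lemma in_unit_square (R : realType) (x : R * R) :
  0 <= x.1 <= 1 -> 0 <= x.2 <= 1 -> unit_square x.
Proof. by move=> x1 x2; split; rewrite /= in_itv. Qed.

Lemma lebesgue_measure_itv_gt0 (R : realType) (l r : bool) (a b : R) : a < b ->
  (0 < lebesgue_measure [set` Interval (BSide l a) (BSide r b)])%E.
Proof.
by move=> ab; rewrite lebesgue_measure_itv /= lte_fin ab -EFinD lte_fin subr_gt0.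
Qed.

Lemma leb2_rect_gt0 (R : realType) (i j : interval R) :
  (0 < lebesgue_measure [set` i])%E -> (0 < lebesgue_measure [set` j])%E ->
  (0 < @leb2 R ([set` i] `*` [set` j]))%E.
Proof.
by move=> i_gt0 j_gt0; rewrite /leb2 product_measure1E ?mule_gt0.
Qed.

Section DensityCdf.
Variables (R : realType) (f : R * R -> R).
Hypothesis f_density : full_support_density f.

Local Notation F := (density_cdf f).
Local Notation S := (@unit_square R).
Local Notation mass A := (\int[@leb2 R]_(y in A) (f y)%:E)%E.

Lemma measurable_unit_square : measurable S.
Proof. exact: measurableX. Qed.

Lemma measurable_lower_rect (x : R * R) : measurable (lower_rect x).
Proof. exact: measurableX. Qed.

Lemma lower_rect_sub (x y : R * R) : x.1 <= y.1 -> x.2 <= y.2 ->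
  lower_rect x `<=` lower_rect y.
Proof.
move=> xy1 xy2 [z1 z2] [] /=; rewrite !in_itv /= => /andP[z1_ge0 z1x] /andP[z2_ge0 z2x].
by split; rewrite /= in_itv /= ?z1_ge0 ?z2_ge0 ?(le_trans z1x) ?(le_trans z2x).
Qed.

Lemma lower_rect_sub_square (x : R * R) : S x -> lower_rect x `<=` S.
Proof.
case=> /=; rewrite !in_itv /= => /andP[_ x1_le1] /andP[_ x2_le1].
exact: (@lower_rect_sub x (1, 1)) x1_le1 x2_le1.
Qed.

Lemma density_mass_ge0 A : A `<=` S -> (0 <= mass A)%E.
Proof.
case: f_density => _ f_gt0 _ _ AS.
by apply: integral_ge0 => y /AS /f_gt0 /ltW; rewrite lee_fin.
Qed.

Lemma density_mass_le1 A : measurable A -> A `<=` S -> (mass A <= 1)%E.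
Proof.
case: f_density => mf f_gt0 _ <- mA AS.
apply: ge0_subset_integral => //; first exact: measurable_unit_square.
  exact/measurable_EFinP.
by move=> y /f_gt0 /ltW; rewrite lee_fin.
Qed.

Lemma density_mass_fin_num A : measurable A -> A `<=` S -> mass A \is a fin_num.
Proof.
move=> mA AS; rewrite ge0_fin_numE ?density_mass_ge0 //.
by rewrite (le_lt_trans (density_mass_le1 mA AS)) ?ltey.
Qed.

Lemma density_mass_gt0 A : measurable A -> A `<=` S -> (0 < @leb2 R A)%E ->
  (0 < mass A)%E.
Proof.
case: f_density => mf f_gt0 _ _ mA AS; apply: integral_gt0 => //.
  exact: measurable_funS measurable_unit_square AS mf.
by move=> y /AS /f_gt0.
Qed.

Lemma density_mass_lt1 A B : measurable A -> measurable B ->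
  A `|` B `<=` S -> A `&` B = set0 -> (0 < @leb2 R B)%E -> (mass A < 1)%E.
Proof.
move=> mA mB ABS AB0 B_gt0.
have [AS BS] : A `<=` S /\ B `<=` S by split=> z Az; apply: ABS; [left|right].
case: f_density => mf f_gt0 _ _.
have massU : mass (A `|` B) = (mass A + mass B)%E.
  apply: ge0_integral_setU => //.
  - by apply/measurable_EFinP; exact: measurable_funS measurable_unit_square ABS mf.
  - by move=> z /ABS /f_gt0 /ltW; rewrite lee_fin.
  - by rewrite disj_set2E; apply/eqP.
have := density_mass_le1 (measurableU _ _ mA mB) ABS; rewrite massU.
apply: lt_le_trans.
by rewrite lteDl ?density_mass_fin_num ?density_mass_gt0.
Qed.

Lemma density_cdf_le x y : S y -> x.1 <= y.1 -> x.2 <= y.2 -> F x <= F y.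
Proof.
move=> Sy xy1 xy2; have xy := lower_rect_sub xy1 xy2.
have yS := lower_rect_sub_square Sy.
have mx := measurable_lower_rect x; have my := measurable_lower_rect y.
case: f_density => mf f_gt0 _ _.
apply: fine_le.
- exact: density_mass_fin_num mx (subset_trans xy yS).
- exact: density_mass_fin_num my yS.
apply: (ge0_subset_integral (@leb2 R) mx my) xy.
  by apply/measurable_EFinP; exact: measurable_funS measurable_unit_square yS mf.
by move=> z /yS /f_gt0 /ltW; rewrite lee_fin.
Qed.

Lemma density_cdf_ge0 x : S x -> 0 <= F x.
Proof.
by move=> Sx; apply/fine_ge0/density_mass_ge0/lower_rect_sub_square.
Qed.

Lemma density_cdf_gt0 x : S x -> 0 < x.1 -> 0 < x.2 -> 0 < F x.
Proof.
move=> Sx x1_gt0 x2_gt0; have xS := lower_rect_sub_square Sx.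
have mx := measurable_lower_rect x.
apply: fine_gt0; apply/andP; split.
  apply: density_mass_gt0 mx xS _.
  exact: leb2_rect_gt0 (lebesgue_measure_itv_gt0 _ _ x1_gt0)
                       (lebesgue_measure_itv_gt0 _ _ x2_gt0).
by rewrite (le_lt_trans (density_mass_le1 mx xS)) ?ltey.
Qed.

Lemma density_cdf_lt1 x : S x -> x.1 < 1 \/ x.2 < 1 -> F x < 1.
Proof.
move=> Sx x_lt1; have xS := lower_rect_sub_square Sx.
have mx := measurable_lower_rect x.
have [x1_ge0 x2_ge0] : 0 <= x.1 /\ 0 <= x.2.
  by case: Sx; rewrite /= !in_itv /= => /andP[-> _] /andP[-> _].
have [B [mB BS xB0 B_gt0]] : exists B, [/\ measurable B, B `<=` S,
    lower_rect x `&` B = set0 & (0 < @leb2 R B)%E].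
  case: x_lt1 => [x1_lt1|x2_lt1].
  - exists (`]x.1, 1] `*` `[0, 1]); split.
    + exact: measurableX.
    + move=> [z1 z2] [] /=; rewrite !in_itv /= => /andP[xz1 z1_le1] z2_01.
      by split; rewrite /= in_itv /= ?z1_le1 ?(le_trans x1_ge0 (ltW xz1)).
    + rewrite -subset0 => -[z1 z2] [[/= + _] [/= + _]].
      by rewrite !in_itv /= => /andP[_ zx1] /andP[xz1 _]; move: zx1; rewrite leNgt xz1.
    + exact: leb2_rect_gt0 (lebesgue_measure_itv_gt0 _ _ x1_lt1)
                           (lebesgue_measure_itv_gt0 _ _ ltr01).
  - exists (`[0, 1] `*` `]x.2, 1]); split.
    + exact: measurableX.
    + move=> [z1 z2] [] /=; rewrite !in_itv /= => z1_01 /andP[xz2 z2_le1].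
      by split; rewrite /= in_itv /= ?z2_le1 ?(le_trans x2_ge0 (ltW xz2)).
    + rewrite -subset0 => -[z1 z2] [[_ /= +] [_ /= +]].
      by rewrite !in_itv /= => /andP[_ zx2] /andP[xz2 _]; move: zx2; rewrite leNgt xz2.
    + exact: leb2_rect_gt0 (lebesgue_measure_itv_gt0 _ _ ltr01)
                           (lebesgue_measure_itv_gt0 _ _ x2_lt1).
rewrite /density_cdf -lte_fin fineK ?density_mass_fin_num //.
by apply: density_mass_lt1 mx mB _ xB0 B_gt0 => z [/xS|/BS].
Qed.

End DensityCdf.

Lemma nn_gt0 (R : realType) (F : R * R -> R) (c : R) (x : R * R) :
  0 < c -> F x < 1 -> 0 < nn F c x.
Proof. by move=> c_gt0 Fx_lt1; rewrite divr_gt0 // mulr_gt0 // subr_gt0. Qed.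

Lemma nn_gt1 (R : realType) (F : R * R -> R) (c : R) (x : R * R) :
  0 < c < 1 -> 0 <= F x < 1 -> 1 < nn F c x.
Proof.
move=> /andP[c_gt0 c_lt1] /andP[Fx_ge0 Fx_lt1].
by rewrite /nn div1r invf_gt1 ?mulr_gt0 ?subr_gt0 //; nra.
Qed.

Lemma nn_le (R : realType) (F : R * R -> R) (c : R) (x y : R * R) :
  0 < c -> F y < 1 -> F x <= F y -> nn F c x <= nn F c y.
Proof.
move=> c_gt0 Fy_lt1 Fxy; rewrite /nn !div1r lef_pV2 ?posrE ?mulr_gt0 ?subr_gt0 //.
  by rewrite ler_pM2l // lerB.
exact: le_lt_trans Fy_lt1.
Qed.

Lemma vee_le_id (R : realType) (x y : R * R) :
  y.1 <= x.1 -> y.2 <= x.2 -> vee x y = x.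
Proof. by case: x => x1 x2 /= le1 le2; rewrite /vee /= !max_l. Qed.

Section Equilibrium.
Variables (R : realType) (F : R * R -> R) (c mu : R) (h m : R * R).
Hypotheses (c_gt0 : 0 < c) (Fh_gt0 : 0 < F h) (Fh_lt1 : F h < 1).
Hypothesis Fm_ge0 : 0 <= F m.
Hypothesis abundant_t : 1 / nn F c h < mu.
Hypothesis abundant_b : F m < F (vee m h) -> nn F c m < mu.

Local Notation Nh := (nn F c h).
Local Notation Nm := (nn F c m).
Local Notation feasible := (feasible F c h m mu).
Local Notation equilibrium := (equilibrium F c h m mu).
Local Notation output := (output F c h m).
Local Notation w_s := (wbar_s F h).
Local Notation w_b := (wbar_b F c h m).
Local Notation w_t := (wbar_t F c h m).
Local Notation w_max := (wstar F c h m).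

Lemma Nh_gt0 : 0 < Nh. Proof. exact: nn_gt0. Qed.

Lemma mu_gt0 : 0 < mu.
Proof. by apply: lt_trans abundant_t; rewrite divr_gt0 ?Nh_gt0. Qed.

Lemma feasible_b_available a : feasible a -> 0 < al_b a -> b_available F m.
Proof.
case=> _ [_ [+ _ _ _]]; case: asboolP => // _ [-> _].
by rewrite ltxx.
Qed.

Lemma feasible_inj a a' : feasible a -> feasible a' ->
  al_s a = al_s a' -> al_b a = al_b a' -> al_t a = al_t a' -> a = a'.
Proof.
case: a a' => [s b t ms mb mt] [s' b' t' ms' mb' mt']; rewrite /feasible /=.
case=> _ [_ [Hb Ht _ Hm]] [_ [_ [Hb' Ht' _ Hm']]] es eb et; subst s' b' t'.
have mb_eq : mb = mb'.
  by move: Hb Hb'; case: asboolP => _; [move=> -> ->|case=> _ -> [_ ->]].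
have mt_eq : mt = mt' by rewrite Ht Ht'.
have ms_eq : ms = ms' by move: Hm'; rewrite -Hm -mb_eq -mt_eq => /addIr /addIr.
by rewrite ms_eq mb_eq mt_eq.
Qed.

Definition duality_gap (a : alloc R) (w r : R) : R :=
  al_s a * - profit_s F h w + mu_s a * - profit_a F m r
  + al_b a * - profit_b F c h m w r + mu_t a * - profit_t F c h m w r.

Lemma duality_gapE a w r : feasible a -> w + r * mu - output a = duality_gap a w r.
Proof.
case=> _ [_ [Hb Ht Hs Hm]].
rewrite /duality_gap /output /profit_s /profit_a /profit_b /profit_t -Hm Ht.
rewrite -{1}[w]mul1r -Hs; have Nh_neq0 := lt0r_neq0 Nh_gt0.
by move: Hb; case: asboolP => _ => [->|[-> ->]]; field.
Qed.

Lemma duality_gap_ge0 a w r : feasible a ->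
  [/\ profit_s F h w <= 0, profit_a F m r <= 0,
      (b_available F m -> profit_b F c h m w r <= 0) & profit_t F c h m w r <= 0] ->
  0 <= duality_gap a w r.
Proof.
move=> fa [ps pa pb pt]; have [[s0 b0 t0] [[ms0 mb0 mt0] _]] := fa.
have b_term : 0 <= al_b a * - profit_b F c h m w r.
  move: b0; rewrite le_eqVlt => /predU1P[<-|b_gt0]; first by rewrite mul0r.
  apply: mulr_ge0; first exact: ltW.
  by rewrite oppr_ge0; exact: pb (feasible_b_available fa b_gt0).
by rewrite /duality_gap !addr_ge0 //; apply: mulr_ge0; rewrite // oppr_ge0.
Qed.

Lemma duality_gap_eq0 a w r : feasible a ->
  [/\ (0 < al_s a -> profit_s F h w = 0), (0 < mu_s a -> profit_a F m r = 0),
      (0 < al_b a -> profit_b F c h m w r = 0)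
    & (0 < al_t a -> profit_t F c h m w r = 0)] ->
  duality_gap a w r = 0.
Proof.
move=> [[s0 b0 t0] [[ms0 mb0 mt0] [_ Ht _ _]]] [zs za zb zt].
have zt' : 0 < mu_t a -> profit_t F c h m w r = 0.
  by rewrite Ht pmulr_lgt0 ?invr_gt0 ?Nh_gt0.
rewrite /duality_gap (mulr_eq0_pos s0) ?(mulr_eq0_pos ms0) ?(mulr_eq0_pos b0)
  ?(mulr_eq0_pos mt0) ?addr0 //.
all: move=> pos; apply/eqP; rewrite oppr_eq0; apply/eqP.
- exact: zt'.
- exact: zb.
- exact: za.
- exact: zs.
Qed.

Lemma equilibrium_output_max a w r a' :
  equilibrium a w r -> feasible a' -> output a' <= output a.
Proof.
move=> [fa _ _ nonpos zero] fa'.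
have gap_a := duality_gapE w r fa; have gap_a' := duality_gapE w r fa'.
rewrite (duality_gap_eq0 fa zero) in gap_a.
have := duality_gap_ge0 fa' nonpos; lra.
Qed.

Lemma profit_b_Fm w : b_available F m -> profit_b F c h m w (F m) = w_b - w.
Proof. by move=> avail; rewrite /wbar_b asboolT. Qed.

Lemma profit_t_Fm w : profit_t F c h m w (F m) = Nh * (w_t - w).
Proof. by rewrite /profit_t /wbar_t; field; exact: lt0r_neq0 Nh_gt0. Qed.

Lemma layered_machines_lt a : feasible a -> (0 < al_b a -> Nm < mu) ->
  mu_b a + mu_t a < mu.
Proof.
move=> fa Nm_lt; have [[s0 b0 t0] [_ [Hb Ht Hs _]]] := fa.
have Nh_inv_lt : Nh^-1 < mu by rewrite -div1r.
have Nh_inv_gt0 : 0 < Nh^-1 by rewrite invr_gt0 Nh_gt0.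
move: b0; rewrite le_eqVlt => /predU1P[b_eq0|b_gt0].
  have mb0 : mu_b a = 0 by move: Hb; case: asboolP => _; [rewrite -b_eq0 mul0r|case].
  rewrite mb0 Ht add0r; nra.
move: Hb; rewrite (asboolT (feasible_b_available fa b_gt0)) => ->; rewrite Ht.
have := Nm_lt b_gt0; nra.
Qed.

Lemma equilibrium_rent a w r : equilibrium a w r -> r = F m.
Proof.
case=> fa w_ge0 _ [ps pa _ _] [_ za zb _].
have [_ [[ms0 _ _] [_ _ _ Hm]]] := fa.
move: ms0; rewrite le_eqVlt => /predU1P[ms_eq0|/za/eqP]; last first.
  by rewrite subr_eq0 => /eqP.
have : mu_b a + mu_t a < mu; last by rewrite -Hm -ms_eq0 add0r ltxx.
apply: (layered_machines_lt fa) => b_gt0; apply: abundant_b.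
have avail := feasible_b_available fa b_gt0.
have /eqP := zb b_gt0; rewrite /profit_b subr_eq0 => /eqP wE.
move: ps pa; rewrite /profit_s /profit_a !subr_le0 => Fh_le_w Fm_le_r.
(* the solver of a bottom-automated firm earns w >= F h > 0, so [F (m \/ h) > r >= F m] *)
apply: le_lt_trans Fm_le_r _; rewrite -subr_gt0 -(pmulr_rgt0 _ (nn_gt0 c_gt0 avail)) wE.
exact: lt_le_trans Fh_gt0 Fh_le_w.
Qed.

Lemma equilibrium_wage_used a w r : equilibrium a w r ->
  [/\ 0 < al_s a -> w = w_s, 0 < al_b a -> w = w_b & 0 < al_t a -> w = w_t].
Proof.
move=> eq_a; have rE := equilibrium_rent eq_a; subst r.
case: eq_a => fa _ _ _ [zs _ zb zt]; split.
- by move/zs/eqP; rewrite subr_eq0 eq_sym => /eqP.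
- move=> b_gt0; have := zb b_gt0.
  rewrite profit_b_Fm; last exact: feasible_b_available fa b_gt0.
  by move/eqP; rewrite subr_eq0 eq_sym => /eqP.
- by move/zt/eqP; rewrite profit_t_Fm mulf_eq0 (gt_eqF Nh_gt0) subr_eq0 eq_sym => /eqP.
Qed.

Lemma wbar_le_wstar : [/\ w_s <= w_max, w_b <= w_max & w_t <= w_max].
Proof. by rewrite /wstar !le_max !lexx !orbT. Qed.

Lemma equilibrium_wage a w r : equilibrium a w r -> w = w_max.
Proof.
move=> eq_a; have [us ub ut] := equilibrium_wage_used eq_a.
have rE := equilibrium_rent eq_a; subst r.
case: eq_a => -[[s0 b0 t0] [_ [_ _ Hs _]]] w_ge0 _ [ps _ pb pt] _.
apply/eqP; rewrite eq_le; apply/andP; split; last first.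
  rewrite /wstar !ge_max; apply/and3P; split.
  - by rewrite -subr_le0.
  - have [avail|navail] := asboolP (b_available F m).
      by have := pb avail; rewrite profit_b_Fm // subr_le0.
    by rewrite /wbar_b asboolF.
  - by move: pt; rewrite profit_t_Fm pmulr_rle0 ?Nh_gt0 // subr_le0.
have [le_s le_b le_t] := wbar_le_wstar.
have [s_gt0|s_le0] := ltP 0 (al_s a); first by rewrite us.
have [b_gt0|b_le0] := ltP 0 (al_b a); first by rewrite ub.
by rewrite ut //; lra.
Qed.

Lemma equilibrium_at_wstar a : feasible a ->
  (0 < al_s a -> w_s = w_max) -> (0 < al_b a -> w_b = w_max) ->
  (0 < al_t a -> w_t = w_max) -> equilibrium a w_max (F m).
Proof.
move=> fa used_s used_b used_t; have [le_s le_b le_t] := wbar_le_wstar.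
split=> //.
- exact: le_trans (ltW Fh_gt0) le_s.
- split; first by rewrite /profit_s subr_le0.
  + by rewrite /profit_a subrr.
  + by move=> avail; rewrite profit_b_Fm // subr_le0.
  + by rewrite profit_t_Fm pmulr_rle0 ?Nh_gt0 // subr_le0.
- split; first by move/used_s <-; rewrite /profit_s subrr.
  + by rewrite /profit_a subrr.
  + move=> b_gt0; rewrite -used_b // profit_b_Fm ?subrr //.
    exact: feasible_b_available fa b_gt0.
  + by move/used_t <-; rewrite profit_t_Fm subrr mulr0.
Qed.

Lemma wbar_b_gt0 : 0 < w_b -> b_available F m /\ F m < F (vee m h).
Proof.
rewrite /wbar_b; case: asboolP => [avail|_]; last by rewrite ltxx.
by rewrite pmulr_rgt0 ?nn_gt0 // subr_gt0.
Qed.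

Lemma wstar_Rs : in_Rs F c h m -> w_max = w_s.
Proof. exact: max_l. Qed.

Lemma wstar_Rb : in_Rb F c h m -> w_max = w_b.
Proof.
rewrite /in_Rb gt_max => /andP[s_lt t_lt].
by rewrite /wstar (max_l (ltW t_lt)) max_r // ltW.
Qed.

Lemma wstar_Rt : ~ in_Rs F c h m -> ~ in_Rb F c h m -> w_max = w_t.
Proof.
rewrite /in_Rs /in_Rb => /negP; rewrite -ltNge => not_s /negP; rewrite -leNgt => not_b.
have [b_le_t|t_lt_b] := leP w_b w_t.
  by rewrite (max_r b_le_t) in not_s; rewrite /wstar (max_r b_le_t) max_r // ltW.
rewrite (max_l (ltW t_lt_b)) in not_s.
by move: not_b; rewrite le_max !leNgt not_s t_lt_b.
Qed.

Lemma star_alloc_equilibrium :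
  equilibrium (star_alloc F c h m mu) w_max (F m).
Proof.
have mu_ge0 := ltW mu_gt0; have Nh_gt0 := Nh_gt0.
rewrite /star_alloc; case: asboolP => [Rs|nRs].
  apply: equilibrium_at_wstar; rewrite /= ?ltxx //; last by rewrite wstar_Rs.
  split; [split|split; [split|split]] => //=; rewrite ?lexx ?ler01 ?mul0r ?addr0 //.
  by case: asboolP => _; rewrite ?mul0r.
case: asboolP => [Rb|nRb].
  have [avail Fm_lt] : b_available F m /\ F m < F (vee m h).
    apply: wbar_b_gt0; move: Rb; rewrite /in_Rb gt_max => /andP[s_lt _].
    exact: lt_trans Fh_gt0 s_lt.
  have Nm_gt0 : 0 < Nm := nn_gt0 c_gt0 avail.
  apply: equilibrium_at_wstar; rewrite /= ?ltxx //; last by rewrite wstar_Rb.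
  split; [split|split; [split|split]] => //=;
    rewrite ?lexx ?ler01 ?subr_ge0 ?ltW ?abundant_b ?mul0r ?addr0 ?add0r ?subrK //.
  by rewrite asboolT // mul1r.
apply: equilibrium_at_wstar; rewrite /= ?ltxx //; last by rewrite wstar_Rt.
split; [split|split; [split|split]] => //=;
  rewrite ?lexx ?ler01 ?subr_ge0 ?(ltW abundant_t) ?(ltW (divr_gt0 ltr01 Nh_gt0)) ?add0r
    ?addr0 ?subrK //.
by case: asboolP => _; rewrite ?mul0r.
Qed.

Lemma equilibrium_unused a w r : equilibrium a w r ->
  [/\ w_s < w_max -> al_s a = 0, w_b < w_max -> al_b a = 0
    & w_t < w_max -> al_t a = 0].
Proof.
move=> eq_a; have wE := equilibrium_wage eq_a.
have [us ub ut] := equilibrium_wage_used eq_a.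
have [[[s0 b0 t0] _] _ _ _ _] := eq_a.
have idle (x wx : R) : 0 <= x -> (0 < x -> w = wx) -> wx < w_max -> x = 0.
  move=> x_ge0 used wx_lt; apply/eqP; rewrite eq_le x_ge0 andbT leNgt.
  by apply/negP => /used; rewrite wE => wx_eq; rewrite wx_eq ltxx in wx_lt.
by split; apply: idle.
Qed.

Lemma unique_max_equilibrium a w r :
  unique_max F c h m -> equilibrium a w r -> a = star_alloc F c h m mu.
Proof.
move=> umax eq_a; have eq_star := star_alloc_equilibrium.
have [ua_s ua_b ua_t] := equilibrium_unused eq_a.
have [us_s us_b us_t] := equilibrium_unused eq_star.
have [le_s le_b le_t] := wbar_le_wstar.
have [fa _ _ _ _] := eq_a; have [fs _ _ _ _] := eq_star.
have [[_ [_ [_ _ Hs _]]] [_ [_ [_ _ Hs' _]]]] := (fa, fs).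
(* the two losing occupations are idle in both equilibria; the winner takes all humans *)
case: umax => [[b_lt t_lt]|[s_lt t_lt]|[s_lt b_lt]].
- have [bs ts] := (lt_le_trans b_lt le_s, lt_le_trans t_lt le_s).
  move: (ua_b bs) (us_b bs) (ua_t ts) (us_t ts) => ab sb at' st.
  by apply: (feasible_inj fa fs); lra.
- have [sb tb] := (lt_le_trans s_lt le_b, lt_le_trans t_lt le_b).
  move: (ua_s sb) (us_s sb) (ua_t tb) (us_t tb) => as' ss at' st.
  by apply: (feasible_inj fa fs); lra.
- have [st bt] := (lt_le_trans s_lt le_t, lt_le_trans b_lt le_t).
  move: (ua_s st) (us_s st) (ua_b bt) (us_b bt) => as' ss ab sb.
  by apply: (feasible_inj fa fs); lra.
Qed.

Theorem equilibrium_characterization :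
  (exists a w r, equilibrium a w r) /\
  (forall a w r, equilibrium a w r ->
     [/\ r = F m, w = w_max & forall a', feasible a' -> output a' <= output a]) /\
  equilibrium (star_alloc F c h m mu) w_max (F m) /\
  (unique_max F c h m -> forall a w r, equilibrium a w r -> a = star_alloc F c h m mu).
Proof.
have star_eq := star_alloc_equilibrium.
split; first by exists (star_alloc F c h m mu), w_max, (F m).
split.
  move=> a w r eq_a; split; [exact: equilibrium_rent eq_a|exact: equilibrium_wage eq_a|].
  by move=> a'; exact: equilibrium_output_max eq_a.
by split=> // umax a w r; exact: unique_max_equilibrium.
Qed.

End Equilibrium.

Section Abundance.
Variables (R : realType) (f : R * R -> R) (c mu : R) (h : R * R).
Hypotheses (f_density : full_support_density f) (c_gt0 : 0 < c) (c_lt1 : c < 1).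
Hypotheses (h1_gt0 : 0 < h.1) (h1_lt1 : h.1 < 1) (h2_gt0 : 0 < h.2) (h2_lt1 : h.2 < 1).
Hypothesis abundant : abundance (density_cdf f) c mu h.

Local Notation F := (density_cdf f).

Let S_h11 : unit_square (h.1, 1).
Proof. by apply: in_unit_square; rewrite /= ?lexx ?ler01 ?ltW. Qed.

Let S_1h2 : unit_square (1, h.2).
Proof. by apply: in_unit_square; rewrite /= ?lexx ?ler01 ?ltW. Qed.

Let F_h11_lt1 : F (h.1, 1) < 1.
Proof. by apply: (density_cdf_lt1 f_density S_h11); left. Qed.

Let F_1h2_lt1 : F (1, h.2) < 1.
Proof. by apply: (density_cdf_lt1 f_density S_1h2); right. Qed.

Let abundant_1h2 : nn F c (1, h.2) < mu.
Proof. by move: abundant; rewrite /abundance gt_max => /andP[]. Qed.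

Let abundant_h11 : nn F c (h.1, 1) < mu.
Proof. by move: abundant; rewrite /abundance gt_max => /andP[]. Qed.

Lemma abundance_top : 1 / nn F c h < mu.
Proof.
have S_h : unit_square h by apply: in_unit_square; rewrite ?ltW.
have F_h_lt1 : F h < 1 by apply: (density_cdf_lt1 f_density S_h); left.
have F_h_ge0 := density_cdf_ge0 f_density S_h.
have F_1h2_ge0 := density_cdf_ge0 f_density S_1h2.
have c01 : 0 < c < 1 by rewrite c_gt0 c_lt1.
have nn_h_gt1 : 1 < nn F c h by apply: nn_gt1 c01 _; rewrite F_h_ge0 F_h_lt1.
have nn_1h2_gt1 : 1 < nn F c (1, h.2).
  by apply: nn_gt1 c01 _; rewrite F_1h2_ge0 F_1h2_lt1.
rewrite div1r; apply: lt_trans abundant_1h2; apply: lt_trans nn_1h2_gt1.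
by rewrite invf_lt1 // (lt_trans ltr01).
Qed.

Lemma abundance_bottom m : unit_square m ->
  F m < F (vee m h) -> nn F c m < mu.
Proof.
move=> S_m Fm_lt.
have [] := S_m; rewrite /= !in_itv /= => /andP[_ m1_le1] /andP[_ m2_le1].
have [m1_lt|m2_lt] : m.1 < h.1 \/ m.2 < h.2.
  case: (ltP m.1 h.1) => [|h1_le]; first by left.
  case: (ltP m.2 h.2) => [|h2_le]; first by right.
  by rewrite vee_le_id // ltxx in Fm_lt.
- apply: le_lt_trans abundant_h11; apply: nn_le c_gt0 F_h11_lt1 _.
  by apply: (density_cdf_le f_density S_h11) => //=; exact: ltW.
- apply: le_lt_trans abundant_1h2; apply: nn_le c_gt0 F_1h2_lt1 _.
  by apply: (density_cdf_le f_density S_1h2) => //=; exact: ltW.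
Qed.

End Abundance.

Theorem proposition1 (R : realType) (f : R * R -> R) (c mu : R) (h m : R * R) :
  full_support_density f ->
  0 < c < 1 ->
  0 < h.1 < 1 -> 0 < h.2 < 1 ->
  0 < mu ->
  abundance (density_cdf f) c mu h ->
  0 <= m.1 <= 1 -> 0 <= m.2 <= 1 ->
  let F := density_cdf f in
  (exists a w r, equilibrium F c h m mu a w r) /\
  (forall a w r, equilibrium F c h m mu a w r ->
     [/\ r = F m, w = wstar F c h m
       & forall a', feasible F c h m mu a' ->
                    output F c h m a' <= output F c h m a]) /\
  equilibrium F c h m mu (star_alloc F c h m mu) (wstar F c h m) (F m) /\
  (unique_max F c h m ->
     forall a w r, equilibrium F c h m mu a w r -> a = star_alloc F c h m mu).
Proof.
move=> f_density /andP[c_gt0 c_lt1] /andP[h1_gt0 h1_lt1] /andP[h2_gt0 h2_lt1] _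
  abundant m1 m2 F; rewrite {}/F.
have S_h : unit_square h by apply: in_unit_square; rewrite ?ltW.
have S_m : unit_square m by apply: in_unit_square.
apply: equilibrium_characterization.
- exact: c_gt0.
- exact: (density_cdf_gt0 f_density S_h h1_gt0 h2_gt0).
- by apply: (density_cdf_lt1 f_density S_h); left.
- exact: (density_cdf_ge0 f_density S_m).
- exact: abundance_top.
- exact: abundance_bottom.
Qed.
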